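(* Let $\pi$ be an algorithmic policy mapping the prediction matrix $\mathbf G=(g_l(X_i))_{i,l}$ to an assignment satisfying the capacity constraints, and suppose that for $P^{\mathcal M}$-almost every realization $(\mathbf x,\mathbf y,\mathbf l)$ of $(\mathbf X,\mathbf Y,\mathbf L)$ we have $\pi(\mathbf g)\in\Pi_{\mathbf x,\mathbf y,\mathbf l}$, where $\mathbf g=(g_l(x_i))$. Then $$\mathbb E_{\mathbf Y\sim P^{\mathcal M;\,do(\mathbf L=\pi(\mathbf G))}}[\mathbf 1^T\mathbf Y]\ \ge\ \mathbb E_{\mathbf Y\sim P^{\mathcal M}}[\mathbf 1^T\mathbf Y],$$ i.e. $\pi$ achieves at least the expected utility of the default policy $\tilde\pi$.
   Context: Setup (structural causal model $\mathcal M$ of a resettlement process). A pool $\mathcal I$ of $n$ refugees is matched to a finite set $\mathcal L$ of $k$ locations, location $l$ having capacity $c_l\in\mathbb N$. Exogenous noise variables $D_i\sim P(D)$ ($i\in\mathcal I$), $V_{i,l}\sim P(V\mid L=l)$ ($i\in\mathcal I,l\in\mathcal L$) and $W\sim P(W)$ are all mutually independent. Endogenous variables: $X_i=f_X(D_i)$, $\mathbf L=\tilde\pi(\mathbf X,W)\in\mathcal L^n$ (default policy $\tilde\pi$), $Y_i=f_Y(D_i,V_{i,L_i})\in\{0,1\}$, $U=\mathbf 1^T\mathbf Y$. A classifier gives maps $g_l:\mathcal X\to[0,1]$. An assignment is a map $\pi:\mathcal I\to\mathcal L$ with $|\{i:\pi_i=l\}|\le c_l$. $\Pi_{\mathbf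 x,\mathbf y,\mathbf l}$ is the set of assignments $\pi$ with $\pi_i=l_i$ for all $i$ with $y_i=1$. The interventional distribution $P^{\mathcal M;do(\mathbf L=\pi(\mathbf G))}$ is obtained by drawing fresh noise, setting $X_i=f_X(D_i)$, $\mathbf G=(g_l(X_i))$, $\mathbf L=\pi(\mathbf G)$, $Y_i=f_Y(D_i,V_{i,L_i})$. *)

From HB Require Import structures.
From mathcomp Require Import all_boot all_order all_algebra.
From mathcomp Require Import all_classical all_reals all_analysis.
Set Implicit Arguments. Unset Strict Implicit. Unset Printing Implicit Defensive.
Import Order.TTheory GRing.Theory Num.Theory.
Local Open Scope classical_set_scope.
Local Open Scope ring_scope.

(* Refugees are 'I_n, locations are 'I_k. *)

Definition respects_capacity (n k : nat) (c : 'I_k -> nat) (a : 'I_n -> 'I_k) : Prop :=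
  forall l : 'I_k, (#|[set i | a i == l]| <= c l)%N.

(* Pi_{x,y,l}: capacity-respecting assignments keeping every successful
   refugee (y_i = 1) at its realized location l_i.  (x is not used.) *)
Definition Pi_xyl (TX : Type) (n k : nat) (c : 'I_k -> nat)
  (x : 'I_n -> TX) (y : 'I_n -> bool) (l : 'I_n -> 'I_k) (a : 'I_n -> 'I_k) : Prop :=
  respects_capacity c a /\ forall i, y i -> a i = l i.

Section SCM.
Context (R : realType) (TX : Type) (n k : nat).
Context (dD dV dW : measure_display)
        (TD : measurableType dD) (TV : measurableType dV) (TW : measurableType dW).
Context (Omega : Type).
Context (D : 'I_n -> Omega -> TD) (V : 'I_n -> 'I_k -> Omega -> TV) (W : Omega -> TW).
Context (fX : TD -> TX) (fY : TD -> TV -> bool).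

Definition scm_X (w : Omega) : 'I_n -> TX := fun i => fX (D i w).

(* observational (default-policy) locations L = pit(X, W) *)
Definition scm_L (pit : ('I_n -> TX) -> TW -> 'I_n -> 'I_k) (w : Omega) : 'I_n -> 'I_k :=
  pit (scm_X w) (W w).

Definition scm_Y (L : Omega -> 'I_n -> 'I_k) (w : Omega) : 'I_n -> bool :=
  fun i => fY (D i w) (V i (L w i) w).

Definition scm_G (g : 'I_k -> TX -> R) (w : Omega) : 'I_n -> 'I_k -> R :=
  fun i l => g l (scm_X w i).

(* locations under do(L = pi(G)) *)
Definition scm_Ldo (g : 'I_k -> TX -> R)
  (pol : ('I_n -> 'I_k -> R) -> 'I_n -> 'I_k) (w : Omega) : 'I_n -> 'I_k :=
  pol (scm_G g w).

Definition utility (Y : 'I_n -> bool) : R := \sum_(i < n) (Y i)%:R.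
End SCM.

(* Mutual independence of the noise variables D_i, V_{i,l}, W on a
   probability space: the product rule for every choice of measurable sets
   (taking full sets recovers every subfamily). *)
Definition noise_independent (R : realType) (d : measure_display) (Omega : measurableType d)
  (P : probability Omega R) (n k : nat)
  (dD dV dW : measure_display)
  (TD : measurableType dD) (TV : measurableType dV) (TW : measurableType dW)
  (D : 'I_n -> Omega -> TD) (V : 'I_n -> 'I_k -> Omega -> TV) (W : Omega -> TW) : Prop :=
  forall (AD : 'I_n -> set TD) (AV : 'I_n -> 'I_k -> set TV) (AW : set TW),
    (forall i, measurable (AD i)) -> (forall i l, measurable (AV i l)) -> measurable AW ->
    P ((\bigcap_(i in [set: 'I_n]) (D i @^-1` AD i))
       `&` (\bigcap_(il in [set: 'I_n * 'I_k]) (V il.1 il.2 @^-1` AV il.1 il.2))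
       `&` (W @^-1` AW))
    = ((\prod_(i < n) P (D i @^-1` AD i))
       * (\prod_(il : 'I_n * 'I_k) P (V il.1 il.2 @^-1` AV il.1 il.2))
       * P (W @^-1` AW))%E.

From HB Require Import structures.
From mathcomp Require Import all_boot all_order all_algebra.
From mathcomp Require Import all_classical all_reals all_analysis.
From mathcomp Require Import measurable_realfun.
Import Order.TTheory GRing.Theory Num.Theory.
Local Open Scope classical_set_scope.
Local Open Scope ring_scope.

(* Evaluate the observational and the interventional model on the same noise
   [w]: this couples the two distributions.  Y_i depends only on D_i and on the
   noise V_{i,L_i} at its own location, so a refugee who succeeds under the
   default policy and is kept at the same place by pi succeeds again.  Hence
   the utility under pi dominates the default utility pathwise, almost surely,
   and integrating gives the claim. *)

Lemma utility_ge0 (R : realType) (n : nat) (Y : 'I_n -> bool) :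
  0 <= utility R Y.
Proof. exact: sumr_ge0. Qed.

Lemma utility_le (R : realType) (n : nat) (Y Y' : 'I_n -> bool) :
  (forall i, Y i -> Y' i) -> utility R Y <= utility R Y'.
Proof.
move=> YY'; rewrite /utility; apply: ler_sum => i _.
by case Yi: (Y i) => //; rewrite YY'.
Qed.

Lemma scm_Y_kept (TX : Type) (n k : nat) (dD dV : measure_display)
    (TD : measurableType dD) (TV : measurableType dV) (Omega : Type)
    (D : 'I_n -> Omega -> TD) (V : 'I_n -> 'I_k -> Omega -> TV)
    (fY : TD -> TV -> bool) (L L' : Omega -> 'I_n -> 'I_k) (w : Omega) :
  (forall i, scm_Y D V fY L w i -> L' w i = L w i) ->
  forall i, scm_Y D V fY L w i -> scm_Y D V fY L' w i.
Proof. by move=> kept i Yi; rewrite /scm_Y kept. Qed.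

Theorem mainTheorem3
  (R : realType) (d : measure_display) (Omega : measurableType d)
  (P : probability Omega R)
  (n k : nat) (c : 'I_k -> nat)
  (dD dV dW : measure_display)
  (TD : measurableType dD) (TV : measurableType dV) (TW : measurableType dW)
  (TX : Type)
  (D : 'I_n -> Omega -> TD) (V : 'I_n -> 'I_k -> Omega -> TV) (W : Omega -> TW)
  (PD : probability TD R) (PV : 'I_k -> probability TV R) (PW : probability TW R)
  (mD : forall i, measurable_fun setT (D i))
  (mV : forall i l, measurable_fun setT (V i l))
  (mW : measurable_fun setT W)
  (lawD : forall i (A : set TD), measurable A -> P (D i @^-1` A) = PD A)
  (lawV : forall i l (A : set TV), measurable A -> P (V i l @^-1` A) = PV l A)
  (lawW : forall (A : set TW), measurable A -> P (W @^-1` A) = PW A)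
  (indep : noise_independent P D V W)
  (fX : TD -> TX) (fY : TD -> TV -> bool)
  (pit : ('I_n -> TX) -> TW -> 'I_n -> 'I_k)
  (g : 'I_k -> TX -> R) (g01 : forall l x, 0 <= g l x <= 1)
  (pol : ('I_n -> 'I_k -> R) -> 'I_n -> 'I_k)
  (pol_cap : forall G, respects_capacity c (pol G))
  (mU : measurable_fun setT
          (fun w => utility R (scm_Y D V fY (scm_L D W fX pit) w)))
  (mUdo : measurable_fun setT
          (fun w => utility R (scm_Y D V fY (scm_Ldo D fX g pol) w)))
  (hPi : {ae P, forall w,
           Pi_xyl c (scm_X D fX w) (scm_Y D V fY (scm_L D W fX pit) w)
                  (scm_L D W fX pit w) (scm_Ldo D fX g pol w)}) :
  (\int[P]_w (utility R (scm_Y D V fY (scm_Ldo D fX g pol) w))%:E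
   >= \int[P]_w (utility R (scm_Y D V fY (scm_L D W fX pit) w))%:E)%E.
Proof.
apply: ae_ge0_le_integral => //.
- by move=> w _; rewrite lee_fin utility_ge0.
- exact/measurable_EFinP.
- by move=> w _; rewrite lee_fin utility_ge0.
- exact/measurable_EFinP.
apply: filterS hPi => w [_ kept] _.
by rewrite lee_fin; apply/utility_le/scm_Y_kept.
Qed.
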